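(* Let $d,b\ge1$, $M=2^b$, $\varepsilon>0$. Let $P_{U^M}$ be a rotationally symmetric codebook-generating distribution and $f$ an unbiased random encoder satisfying $\varepsilon$-LDP with respect to $P_{U^M}$ (with the selecting decoder). Then there exists a random encoder $f_2$ such that $\mathrm{Err}(f,P_{U^M})\ge\mathrm{Err}(f_2,P_{U^M})$ and $D(v,f_2,P_{U^M})=D(v',f_2,P_{U^M})$ for all $v,v'\in\mathbb{S}^{d-1}$.
   Context: $\mathbb{S}^{d-1}$ is the unit sphere in $\mathbb{R}^d$, $[M]=\{1,\dots,M\}$. The server and user share a random codebook $U^M=(U_1,\dots,U_M)\in(\mathbb{R}^d)^M$ with distribution $P_{U^M}$; the user's random encoder $f:\mathbb{S}^{d-1}\times(\mathbb{R}^d)^M\to[M]$ has transition probabilities $Q_f(m\mid v,u^M)$, and the server decodes message $m$ as $U_m$. The encoder is $\varepsilon$-LDP if $Q_f(m\mid v,u^M)\le e^\varepsilon Q_f(m\mid v',u^M)$ for all $v,v'\in\mathbb{S}^{d-1}$, $m\in[M]$ and $P_{U^M}$-almost all $u^M$; it is unbiased if $\mathbb{E}_{P_{U^M}}[\sum_{m=1}^M U_mQ_f(m\mid v,U^M)]=v$ for all $v\in\mathbb{S}^{d-1}$. Its error at $v$ is $D(v,f,P_{U^M})=\mathbb{E}_{P_{U^M}}[\sum_{m=1}^M\|U_m-v\|_2^2Q_f(m\mid v,U^M)]$, and $\mathrm{Err}(f,P_{U^M})=\sup_{v\in\mathbb{S}^{d-1}}D(v,f,P_{U^M})$. $P_{U^M}$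 is rotationally symmetric if $(U_1,\dots,U_M)$ and $(A_0U_1,\dots,A_0U_M)$ have the same distribution for every $d\times d$ orthogonal matrix $A_0$. *)

From HB Require Import structures.
From mathcomp Require Import all_boot all_order all_algebra.
From mathcomp Require Import all_classical all_reals all_analysis.
Set Implicit Arguments. Unset Strict Implicit. Unset Printing Implicit Defensive.
Import Order.TTheory GRing.Theory Num.Theory.
Local Open Scope classical_set_scope.
Local Open Scope ring_scope.

(* Both carry the product sigma-algebra (Borel on R),
   which MathComp-Analysis puts on n.-tuple T. *)
Definition codebook (R : realType) (d M : nat) := M.-tuple (d.-tuple R).

Definition sqdist (R : realType) (d : nat) (x y : d.-tuple R) : R :=
  \sum_(j < d) (tnth x j - tnth y j) ^+ 2.

Definition sphere (R : realType) (d : nat) : set (d.-tuple R) :=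
  [set v | \sum_(j < d) tnth v j ^+ 2 = 1].
Arguments sphere : clear implicits.

Definition rot (R : realType) (d : nat) (A : 'M[R]_d) (x : d.-tuple R)
  : d.-tuple R := [tuple \sum_(k < d) A j k * tnth x k | j < d].
Definition rot_cb (R : realType) (d M : nat) (A : 'M[R]_d)
  (u : codebook R d M) : codebook R d M := [tuple rot A (tnth u m) | m < M].

Definition orthogonal (R : realType) (d : nat) (A : 'M[R]_d) : Prop :=
  A *m A^T = 1%:M.

Definition rot_sym (R : realType) (d M : nat)
  (P : probability (codebook R d M) R) : Prop :=
  forall A : 'M[R]_d, orthogonal A ->
  forall S : set (codebook R d M), measurable S ->
    P (rot_cb A @^-1` S) = P S.

(* A random encoder: Q f (m | v, u^M) = Q v u m, a transition probability
   (a probability vector on [M] for every (v,u^M), measurable in u^M). *)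
Definition encoder (R : realType) (d M : nat) :=
  d.-tuple R -> codebook R d M -> 'I_M -> R.

Definition random_encoder (R : realType) (d M : nat) (Q : encoder R d M)
  : Prop :=
  (forall v u m, 0 <= Q v u m) /\
  (forall v u, \sum_(m < M) Q v u m = 1) /\
  (forall v m, measurable_fun setT (fun u => Q v u m)).

Definition ldp (R : realType) (d M : nat) (eps : R)
  (P : probability (codebook R d M) R) (Q : encoder R d M) : Prop :=
  forall v v' m, v \in sphere R d -> v' \in sphere R d ->
    {ae P, forall u, Q v u m <= expR eps * Q v' u m}.

Definition unbiased (R : realType) (d M : nat)
  (P : probability (codebook R d M) R) (Q : encoder R d M) : Prop :=
  forall v, v \in sphere R d -> forall j : 'I_d,
    let g := fun u : codebook R d M =>
      (\sum_(m < M) tnth (tnth u m) j * Q v u m)%:E in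
    P.-integrable setT g /\ (\int[P]_u g u = (tnth v j)%:E)%E.

Definition Dist (R : realType) (d M : nat)
  (Q : encoder R d M) (P : probability (codebook R d M) R)
  (v : d.-tuple R) : \bar R :=
  (\int[P]_u (\sum_(m < M) sqdist (tnth u m) v * Q v u m)%:E)%E.

Definition Err (R : realType) (d M : nat)
  (Q : encoder R d M) (P : probability (codebook R d M) R) : \bar R :=
  ereal_sup [set Dist Q P v | v in sphere R d].

(** Every point [v] of the sphere is carried to a fixed point [e] of the
    sphere by an orthogonal map, the Householder reflection [H_v] in the
    hyperplane orthogonal to [v - e].  The encoder [f2(v, u^M) :=
    f(e, H_v u^M)] first rotates the codebook and then encodes [e]; since
    rotations preserve distances and, by rotational symmetry, the law of the
    codebook, its error at every [v] equals the error of [f] at [e], which is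
    at most [Err f]. *)

From Pilot Require Import Defs.
From HB Require Import structures.
From mathcomp Require Import all_boot all_order all_algebra.
From mathcomp Require Import all_classical all_reals all_analysis.
From mathcomp Require Import measurable_realfun ring.
Import Order.TTheory GRing.Theory Num.Theory.
Local Open Scope classical_set_scope.
Local Open Scope ring_scope.
Local Notation rot := Defs.rot.
Local Notation orthogonal := Defs.orthogonal.

Set Implicit Arguments.
Unset Strict Implicit.

Section OrthogonalMaps.
Variables (R : realType) (d : nat).
Implicit Types (A : 'M[R]_d) (x y : d.-tuple R).

Lemma sum_kronecker (i : 'I_d) (F : 'I_d -> R) :
  \sum_(k < d) (k == i)%:R * F k = F i.
Proof.
rewrite (bigD1 i) //= eqxx mul1r big1 ?addr0 // => k /negbTE ->.
exact: mul0r.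
Qed.

Lemma tnth_rot A x j : tnth (rot A x) j = \sum_(k < d) A j k * tnth x k.
Proof. by rewrite tnth_mktuple. Qed.

Lemma rot1mx x : rot 1%:M x = x.
Proof.
apply: eq_from_tnth => i; rewrite tnth_rot -[RHS]sum_kronecker.
by apply: eq_bigr => k _; rewrite mxE eq_sym.
Qed.

Lemma sqdist_rot A x y :
  orthogonal A -> sqdist (rot A x) (rot A y) = sqdist x y.
Proof.
move=> /mulmx1C AtA; rewrite /sqdist.
transitivity (\sum_(j < d) \sum_(k < d) \sum_(l < d)
   A j k * A j l * ((tnth x k - tnth y k) * (tnth x l - tnth y l))).
  apply: eq_bigr => j _; rewrite !tnth_rot -sumrB.
  under eq_bigr do rewrite -mulrBr.
  rewrite expr2 mulr_suml; apply: eq_bigr => k _; rewrite mulr_sumr.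
  by apply: eq_bigr => l _; rewrite mulrACA.
rewrite exchange_big /=; apply: eq_bigr => k _; rewrite exchange_big /=.
rewrite [RHS]expr2 -[RHS](sum_kronecker k
  (fun l => (tnth x k - tnth y k) * (tnth x l - tnth y l))).
apply: eq_bigr => l _; rewrite -mulr_suml.
have := congr1 (fun B : 'M[R]_d => B l k) AtA; rewrite !mxE => <-.
by congr (_ * _); apply: eq_bigr => j _; rewrite !mxE mulrC.
Qed.

Lemma measurable_rot_cb M A : measurable_fun setT (@rot_cb R d M A).
Proof.
apply/measurable_fun_tnthP => m; apply/measurable_fun_tnthP => j.
rewrite /comp /=; under eq_fun do rewrite tnth_mktuple tnth_rot.
apply: measurable_sum => k; apply: measurable_funM => //.
exact: (measurableT_comp (measurable_tnth k) (measurable_tnth m)).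
Qed.

Definition sqnorm (w : 'I_d -> R) : R := \sum_(k < d) w k ^+ 2.

Definition reflection (w : 'I_d -> R) : 'M[R]_d :=
  if sqnorm w == 0 then 1%:M
  else \matrix_(i, j) ((i == j)%:R - 2 / sqnorm w * w i * w j).

Lemma reflection_orthogonal w : orthogonal (reflection w).
Proof.
rewrite /orthogonal /reflection; set s := sqnorm w.
have [_|s_neq0] := eqVneq s 0; first by rewrite trmx1 mulmx1.
apply/matrixP => i j; rewrite !mxE; set c := 2 / s.
transitivity (\sum_(k < d) ((k == i)%:R * ((k == j)%:R - c * w j * w k)
   - c * w i * ((k == j)%:R * w k) + c ^+ 2 * w i * w j * w k ^+ 2)).
  by apply: eq_bigr => k _; rewrite !mxE (eq_sym i k) (eq_sym j k); ring.
rewrite !big_split /= sum_kronecker sumrN -mulr_sumr sum_kronecker.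
rewrite -mulr_sumr -[\sum_(k < d) _]/s (eq_sym i j).
have -> : c ^+ 2 * w i * w j * s = 2 * c * w i * w j by rewrite /c; field.
ring.
Qed.

Definition householder (e v : d.-tuple R) : 'M[R]_d :=
  reflection (fun k => tnth v k - tnth e k).

Lemma rot_householder e v :
  sqnorm (tnth v) = sqnorm (tnth e) ->
  rot (householder e v) v = e.
Proof.
move=> norm_ve; rewrite /householder /reflection.
set w := fun k => tnth v k - tnth e k; set s := sqnorm w.
have [s0|s_neq0] := eqVneq s 0.
  rewrite rot1mx; apply: eq_from_tnth => i; apply/eqP.
  rewrite -subr_eq0 -sqrf_eq0; apply/eqP.
  by apply: (psumr_eq0P _ s0) => // k _; exact: sqr_ge0.
(* [s = |v|^2 - 2 e.v + |e|^2 = 2 (w.v)], so [v - 2 (w.v)/s w = v - w = e]. *)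
have wv : \sum_(k < d) w k * tnth v k = s / 2.
  suff -> : s = 2 * \sum_(k < d) w k * tnth v k by field.
  transitivity (\sum_(k < d)
    (2 * (w k * tnth v k) + (tnth e k ^+ 2 - tnth v k ^+ 2))).
    by apply: eq_bigr => k _; rewrite /w; ring.
  rewrite big_split sumrB /= -[\sum_(k < d) tnth e k ^+ 2]/(sqnorm (tnth e)).
  by rewrite -norm_ve subrr addr0 mulr_sumr.
apply: eq_from_tnth => i; rewrite tnth_rot.
transitivity (\sum_(k < d)
  ((k == i)%:R * tnth v k - 2 / s * w i * (w k * tnth v k))).
  by apply: eq_bigr => k _; rewrite !mxE eq_sym /w; ring.
by rewrite sumrB sum_kronecker -mulr_sumr wv /w; field.
Qed.

Definition unit_tuple (i : 'I_d) : d.-tuple R := [tuple (j == i)%:R | j < d].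

Lemma unit_tuple_sphere i : unit_tuple i \in sphere R d.
Proof.
rewrite inE /sphere /= -[RHS](sum_kronecker i (fun=> 1)).
apply: eq_bigr => k _; rewrite tnth_mktuple mulr1.
by case: eqP; rewrite ?expr1n ?expr0n.
Qed.

End OrthogonalMaps.

Section RotatedEncoder.
Variables (R : realType) (d M : nat) (P : probability (codebook R d M) R).
Hypothesis P_rot_sym : rot_sym P.

Lemma integral_rot_cb (A : 'M[R]_d) (g : codebook R d M -> \bar R) :
  orthogonal A -> measurable_fun setT g -> (forall u, 0 <= g u)%E ->
  (\int[P]_u g (rot_cb A u) = \int[P]_u g u)%E.
Proof.
move=> oA mg g_ge0.
rewrite -[in LHS](preimage_setT (rot_cb A)).
rewrite -ge0_integral_pushforward //; last exact: measurable_rot_cb.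
apply: eq_measure_integral; first exact: measurable_rot_cb.
by move=> ? S mS _ /=; rewrite /pushforward; exact: P_rot_sym.
Qed.

Lemma measurable_sqdist_tnth (m : 'I_M) (x : d.-tuple R) :
  measurable_fun setT (fun u : codebook R d M => sqdist (tnth u m) x).
Proof.
apply: measurable_sum => j; under eq_fun do rewrite expr2.
have mt : measurable_fun setT
    (fun u : codebook R d M => tnth (tnth u m) j - tnth x j).
  apply: measurable_funB => //.
  exact: (measurableT_comp (measurable_tnth j) (measurable_tnth m)).
exact: (measurable_funM mt mt).
Qed.

Definition rotated_encoder (f : encoder R d M) (e : d.-tuple R) :
  encoder R d M :=
  fun v u => f e (rot_cb (householder e v) u).

Variable f : encoder R d M.
Hypothesis f_random : random_encoder f.

Lemma random_encoder_rotated e : random_encoder (rotated_encoder f e).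
Proof.
case: f_random => f_ge0 [f_sum1 f_meas]; split=> [v u m|]; first exact: f_ge0.
split=> [v u|v m]; first exact: f_sum1.
by apply: (measurableT_comp (f_meas e m)); exact: measurable_rot_cb.
Qed.

Lemma Dist_rotated_encoder e v : e \in sphere R d -> v \in sphere R d ->
  Dist (rotated_encoder f e) P v = Dist f P e.
Proof.
rewrite !inE /sphere /= => se sv; case: f_random => f_ge0 [_ f_meas].
have oH := reflection_orthogonal (fun k => tnth v k - tnth e k).
rewrite /Dist -[in RHS](integral_rot_cb oH); first last.
- by move=> u; rewrite lee_fin; apply: sumr_ge0 => m _;
    apply: mulr_ge0 => //; apply: sumr_ge0 => j _; exact: sqr_ge0.
- apply/measurable_EFinP; apply: measurable_sum => m.
  exact: (measurable_funM (measurable_sqdist_tnth m e) (f_meas e m)).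
apply: eq_integral => u _; congr EFin; apply: eq_bigr => m _.
rewrite /rotated_encoder tnth_mktuple.
have Hv_e := rot_householder (etrans sv (esym se)).
by rewrite -[X in _ = sqdist _ X * _]Hv_e sqdist_rot.
Qed.

Lemma Err_rotated_encoder_le e : e \in sphere R d ->
  (Err (rotated_encoder f e) P <= Err f P)%E.
Proof.
move=> se; apply: le_ereal_sup => _ [v sv <-].
exists e; first exact: set_mem.
by rewrite Dist_rotated_encoder //; exact: mem_set.
Qed.

End RotatedEncoder.

Theorem lemma4 (R : realType) (d b : nat) (eps : R)
  (P : probability (codebook R d (2 ^ b)) R) (f : encoder R d (2 ^ b)) :
  (1 <= d)%N -> (1 <= b)%N -> 0 < eps ->
  rot_sym P -> random_encoder f -> unbiased P f -> ldp eps P f ->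
  exists f2 : encoder R d (2 ^ b),
    random_encoder f2 /\
    (Err f2 P <= Err f P)%E /\
    (forall v v', v \in sphere R d -> v' \in sphere R d ->
       Dist f2 P v = Dist f2 P v').
Proof.
move=> d_gt0 _ _ P_rot_sym f_random _ _.
pose e := unit_tuple R (Ordinal d_gt0).
have se : e \in sphere R d := unit_tuple_sphere R _.
exists (rotated_encoder f e); split; first exact: random_encoder_rotated.
split; first exact: Err_rotated_encoder_le.
by move=> v v' sv sv'; rewrite !Dist_rotated_encoder.
Qed.
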